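(* Let $A$ be a commutative unital ring of characteristic $0$, $n\ge4$, $k\in\{3,\ldots,n-1\}$ and $(b_1,\ldots,b_k)\in A^k$. Let $s=(1_A,n_A-2_A,1_A,2_A,\ldots,2_A)\in A^n$ (last $n-3$ entries equal to $2_A$). Then $(b_1,\ldots,b_k)$ can be used to reduce $s$ (i.e. $(b_1,\ldots,b_k)$ is a $\lambda$-quiddity over $A$ and there exists $(c_1,\ldots,c_{n+2-k})\in A^{n+2-k}$ with $s\sim(c_1,\ldots,c_{n+2-k})\oplus(b_1,\ldots,b_k)$) if and only if $(b_1,\ldots,b_k)=(k_A-2_A,1_A,2_A,\ldots,2_A,1_A)$ or $(b_1,\ldots,b_k)=(1_A,2_A,\ldots,2_A,1_A,k_A-2_A)$, where in each case the number of entries equal to $2_A$ is $k-3$ (possibly zero).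
   Context: $k_A=k\cdot1_A$ for an integer $k$. For $a_1,\ldots,a_n\in A$, $M_n(a_1,\ldots,a_n)=\begin{pmatrix}a_n&-1\\1&0\end{pmatrix}\cdots\begin{pmatrix}a_1&-1\\1&0\end{pmatrix}$. An $n$-tuple $(a_1,\ldots,a_n)\in A^n$ is a $\lambda$-quiddity over $A$ if $M_n(a_1,\ldots,a_n)=\pm\mathrm{Id}$. For $(a_1,\ldots,a_n)\in A^n$, $(b_1,\ldots,b_m)\in A^m$, define $(a_1,\ldots,a_n)\oplus(b_1,\ldots,b_m)=(a_1+b_m,a_2,\ldots,a_{n-1},a_n+b_1,b_2,\ldots,b_{m-1})$. Write $(a_1,\ldots,a_n)\sim(b_1,\ldots,b_n)$ if $(b_1,\ldots,b_n)$ is obtained from $(a_1,\ldots,a_n)$ or from $(a_n,\ldots,a_1)$ by a cyclic permutation. *)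

From mathcomp Require Import all_boot all_algebra.
Set Implicit Arguments. Unset Strict Implicit. Unset Printing Implicit Defensive.
Import GRing.Theory.
Local Open Scope ring_scope.

Definition char0 (A : comNzRingType) : Prop := forall m : nat, (m.+1)%:R != 0 :> A.

Definition qmat (A : comNzRingType) (a : A) : 'M[A]_2 :=
  \matrix_(i < 2, j < 2)
    if i == 0 then (if j == 0 then a else -1) else (if j == 0 then 1 else 0).

(* M_n(a_1,...,a_n) = qmat a_n * ... * qmat a_1 *)
Definition Mn (A : comNzRingType) (s : seq A) : 'M[A]_2 :=
  foldl (fun M a => qmat a *m M) 1%:M s.

Definition lambda_quiddity (A : comNzRingType) (s : seq A) : Prop :=
  Mn s = 1%:M \/ Mn s = - 1%:M.

(* (a_1..a_n) (+) (b_1..b_m) = (a_1+b_m, a_2..a_{n-1}, a_n+b_1, b_2..b_{m-1});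
   meaningful for n, m >= 2 *)
Definition oplus (A : comNzRingType) (a b : seq A) : seq A :=
  (head 0 a + last 0 b) :: take (size a - 2) (behead a)
  ++ (last 0 a + head 0 b) :: take (size b - 2) (behead b).

Definition qsim (A : comNzRingType) (a b : seq A) : Prop :=
  exists i : nat, b = rot i a \/ b = rot i (rev a).

Definition sseq (A : comNzRingType) (n : nat) : seq A :=
  [:: 1; n%:R - 2%:R; 1] ++ nseq (n - 3) 2%:R.

From mathcomp Require Import all_boot all_algebra.
From mathcomp Require Import ring zify.
Set Implicit Arguments. Unset Strict Implicit. Unset Printing Implicit Defensive.
Import GRing.Theory.
Local Open Scope ring_scope.

(* Write b = (b_1, w, b_k).  Multiplying out M(b) shows that b is
   a lambda-quiddity exactly when M(w) has the shape [[p, -p b_1], [b_k p, _]]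
   with p = +-1 (frame lemma); in particular the corner entry of M(w) is +-1.
   If s ~ c (+) b, then w, the inner part of b, is the tail of length k-2 of a
   rotation of s or of its reverse.  Every such window of the cyclic word
   (1, n-2, 1, 2, ..., 2) is listed: those containing n-2 in the interior, or
   consisting only of 2's, have corner entry e+2 for some e >= 0, which is not
   +-1 in characteristic 0; the remaining windows are (1, 2, ..., 2) and
   (2, ..., 2, 1), and the frame lemma then forces b to be one of the two
   announced tuples.  Conversely both tuples are lambda-quiddities and an
   explicit c realizes the reduction. *)

Section TwoByTwo.
Variable A : comNzRingType.

Definition mx2 (a b c d : A) : 'M[A]_2 := \matrix_(i < 2, j < 2)
  if i == 0 then (if j == 0 then a else b) else (if j == 0 then c else d).

Lemma qmatE (a : A) : qmat a = mx2 a (-1) 1 0. Proof. by []. Qed.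

Lemma mx2_mul (a b c d a' b' c' d' : A) : mx2 a b c d *m mx2 a' b' c' d' =
  mx2 (a * a' + b * c') (a * b' + b * d') (c * a' + d * c') (c * b' + d * d').
Proof.
apply/matrixP=> i j; rewrite !mxE !big_ord_recl big_ord0 !mxE /=.
by case: i => [[|[|?]] ?] //; case: j => [[|[|?]] ?] //=; rewrite addr0.
Qed.

Lemma mx2_1 : (1%:M : 'M[A]_2) = mx2 1 0 0 1.
Proof.
by apply/matrixP=> i j; rewrite !mxE; case: i => [[|[|?]] ?] //; case: j => [[|[|?]] ?].
Qed.

Lemma mx2_N1 : (- 1%:M : 'M[A]_2) = mx2 (-1) 0 0 (-1).
Proof.
apply/matrixP=> i j; rewrite !mxE.
by case: i => [[|[|?]] ?] //; case: j => [[|[|?]] ?] //=; rewrite ?oppr0.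
Qed.

Lemma mx2_inj (a b c d a' b' c' d' : A) : mx2 a b c d = mx2 a' b' c' d' ->
  [/\ a = a', b = b', c = c' & d = d'].
Proof.
move/matrixP=> E; have := E 0 0; have := E 0 1; have := E 1 0; have := E 1 1.
by rewrite !mxE.
Qed.

Lemma mx2_eta (M : 'M[A]_2) : M = mx2 (M 0 0) (M 0 1) (M 1 0) (M 1 1).
Proof.
apply/matrixP=> i j; rewrite !mxE.
by case: i => [[|[|?]] ?] //; case: j => [[|[|?]] ?] //=; congr (M _ _); apply/val_inj.
Qed.

Lemma mx2_corner (a b c d : A) : mx2 a b c d 0 0 = a.
Proof. by rewrite mxE. Qed.

Lemma Mn_foldl (s : seq A) (M0 : 'M[A]_2) :
  foldl (fun M a => qmat a *m M) M0 s = Mn s *m M0.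
Proof.
elim: s M0 => [|x s IH] M0 /=; first by rewrite /Mn /= mul1mx.
by rewrite /Mn /= !IH mulmx1 mulmxA.
Qed.

Lemma Mn_nil : Mn [::] = mx2 1 0 0 1 :> 'M[A]_2.
Proof. by rewrite /Mn /= mx2_1. Qed.

Lemma Mn_cons (x : A) (s : seq A) : Mn (x :: s) = Mn s *m qmat x.
Proof. by rewrite /Mn /= Mn_foldl mulmx1. Qed.

Lemma Mn_cat (x y : seq A) : Mn (x ++ y) = Mn y *m Mn x.
Proof. by rewrite /Mn foldl_cat Mn_foldl. Qed.

Lemma Mn_twos (j : nat) :
  Mn (nseq j 2%:R) = mx2 (j.+1%:R) (- j%:R) (j%:R) (1 - j%:R) :> 'M[A]_2.
Proof.
elim: j => [|j IH]; first by rewrite Mn_nil /= oppr0 ?subr0 ?addr0.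
by rewrite /= Mn_cons IH qmatE mx2_mul; congr mx2; rewrite !mulrS; ring.
Qed.

End TwoByTwo.

Section Frame.
Variable A : comNzRingType.

(* Frame lemma: M(b_1, w, b_k) is obtained from M(w) = [[p, q], [r, t]] by
   multiplying with qmat b_1 and qmat b_k; comparing it with +-Id entrywise
   gives p = +-1, r = b_k p and q = -p b_1. *)
Lemma quiddity_frame (b1 bk p q r t : A) (w : seq A) :
  lambda_quiddity (b1 :: w ++ [:: bk]) -> Mn w = mx2 p q r t ->
  [/\ p = 1 \/ p = -1, r = bk * p & q = - (p * b1)].
Proof.
move=> Hb Hw.
have E : Mn (b1 :: w ++ [:: bk]) =
    mx2 ((bk * p - r) * b1 + bk * q - t) (- (bk * p - r)) (p * b1 + q) (- p).
  by rewrite Mn_cons Mn_cat Hw Mn_cons Mn_nil !qmatE !mx2_mul; congr mx2; ring.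
have from_scalar (e : A) : Mn (b1 :: w ++ [:: bk]) = mx2 e 0 0 e ->
    [/\ p = - e, r = bk * p & q = - (p * b1)].
  rewrite E => /mx2_inj [_ h2 h3 h4]; split.
  - by rewrite -h4 opprK.
  - by apply/eqP; rewrite eq_sym -subr_eq0 -oppr_eq0 h2.
  - by apply/eqP; rewrite -subr_eq0 opprK addrC h3.
case: Hb => Hb; rewrite ?mx2_N1 ?mx2_1 in Hb; have [hp hr hq] := from_scalar _ Hb;
  split=> //; rewrite hp ?opprK; first [by left | by right].
Qed.

Lemma quiddity_corner (b1 bk : A) (w : seq A) :
  lambda_quiddity (b1 :: w ++ [:: bk]) -> Mn w 0 0 = 1 \/ Mn w 0 0 = -1.
Proof. by move/quiddity_frame/(_ (mx2_eta (Mn w))) => []. Qed.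

Lemma quiddity_one_twos (j : nat) (b1 bk : A) :
  lambda_quiddity (b1 :: (1 :: nseq j 2%:R) ++ [:: bk]) ->
  b1 = (j.+1)%:R /\ bk = 1.
Proof.
have Hw : Mn (1 :: nseq j 2%:R) = mx2 1 (- (j.+1)%:R) 1 (- j%:R) :> 'M[A]_2.
  by rewrite Mn_cons Mn_twos qmatE mx2_mul; congr mx2; rewrite ?mulrS; ring.
move/quiddity_frame/(_ Hw) => [_ hk h1].
by split; [apply: oppr_inj; rewrite h1 mul1r | rewrite hk mulr1].
Qed.

Lemma quiddity_twos_one (j : nat) (b1 bk : A) :
  lambda_quiddity (b1 :: (nseq j 2%:R ++ [:: 1]) ++ [:: bk]) ->
  b1 = 1 /\ bk = (j.+1)%:R.
Proof.
have Hw : Mn (nseq j 2%:R ++ [:: 1]) = mx2 1 (- 1) (j.+1)%:R (- j%:R) :> 'M[A]_2.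
  rewrite Mn_cat Mn_cons Mn_nil Mn_twos qmatE !mx2_mul.
  by congr mx2; rewrite ?mulrS; ring.
move/quiddity_frame/(_ Hw) => [_ hk h1].
by split; [apply: oppr_inj; rewrite h1 mul1r | rewrite hk mulr1].
Qed.

Lemma quiddity_left_form (j : nat) :
  lambda_quiddity ((j.+1)%:R :: (1 :: nseq j 2%:R) ++ [:: 1 : A]).
Proof.
right; rewrite mx2_N1 Mn_cons Mn_cat !Mn_cons Mn_nil Mn_twos !qmatE !mx2_mul.
by congr mx2; rewrite ?mulrS; ring.
Qed.

Lemma quiddity_right_form (j : nat) :
  lambda_quiddity (1 :: (nseq j 2%:R ++ [:: 1]) ++ [:: (j.+1)%:R : A]).
Proof.
right; rewrite mx2_N1 Mn_cons !Mn_cat !Mn_cons Mn_nil Mn_twos !qmatE !mx2_mul.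
by congr mx2; rewrite ?mulrS; ring.
Qed.

End Frame.

Section Windows.
Variable A : comNzRingType.

Lemma split_ends (b : seq A) (k : nat) : size b = k -> (2 <= k)%N ->
  b = head 0 b :: take (k - 2) (behead b) ++ [:: last 0 b].
Proof.
case: b => [<- //|x b /= <- Hk]; case/lastP: b Hk => [|b y] //= _.
by rewrite size_rcons subSS subn1 /= -cats1 take_size_cat // last_cat.
Qed.

Lemma oplus_drop (c b : seq A) (m k : nat) :
  size c = m -> size b = k -> (2 <= m)%N ->
  drop m (oplus c b) = take (k - 2) (behead b).
Proof.
move=> Hc Hb Hm.
have -> : oplus c b = ((head 0 c + last 0 b) :: take (size c - 2) (behead c)
    ++ [:: last 0 c + head 0 b]) ++ take (size b - 2) (behead b).
  by rewrite /oplus /= -catA.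
by rewrite drop_size_cat ?Hb //= size_cat /= size_takel ?size_behead Hc; lia.
Qed.

Lemma oplus_explicit (x0 y b1 bk : A) (u w : seq A) :
  oplus ((x0 - bk) :: u ++ [:: y - b1]) (b1 :: w ++ [:: bk]) = x0 :: u ++ y :: w.
Proof.
rewrite /oplus /= !size_cat /= !addn1 !subSS !subn0 !take_size_cat //.
by rewrite !last_cat /= !subrK.
Qed.

Lemma size_sseq (n : nat) : (3 <= n)%N -> size (sseq A n) = n.
Proof. by move=> h; rewrite /sseq size_cat size_nseq /=; lia. Qed.

Definition sseq_rotation (n : nat) (F : seq A) : Prop :=
  (exists p q, (p + q = n - 3)%N /\
     F = nseq p 2%:R ++ [:: 1; n%:R - 2%:R; 1] ++ nseq q 2%:R)
  \/ F = [:: n%:R - 2%:R; 1] ++ nseq (n - 3) 2%:R ++ [:: 1]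
  \/ F = [:: 1] ++ nseq (n - 3) 2%:R ++ [:: 1; n%:R - 2%:R].

Lemma rot_sseq (n i : nat) : (4 <= n)%N -> sseq_rotation n (rot i (sseq A n)).
Proof.
move=> hn; case: i => [|[|[|j]]]; [ | by right; left | by right; right | ].
  by left; exists 0%N, (n - 3)%N; rewrite rot0; split; [lia|].
case: (ltnP j.+3 n) => h; last first.
  left; exists 0%N, (n - 3)%N; split; first lia.
  by rewrite rot_oversize // size_sseq //; lia.
left; exists (n - 3 - j)%N, j; split; first lia.
have -> : sseq A n =
    ([:: 1; n%:R - 2%:R; 1] ++ nseq j 2%:R) ++ nseq (n - 3 - j) 2%:R.
  by rewrite /sseq -catA -nseqD; congr (_ ++ nseq _ _); lia.
have -> : j.+3 = size ([:: 1; n%:R - 2%:R; 1] ++ nseq j (2%:R : A)).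
  by rewrite size_cat size_nseq.
by rewrite rot_size_cat.
Qed.

Lemma rot_rev_sseq (n i : nat) : (4 <= n)%N ->
  sseq_rotation n (rot i (rev (sseq A n))).
Proof.
move=> hn; have -> : rev (sseq A n) = nseq (n - 3) 2%:R ++ [:: 1; n%:R - 2%:R; 1].
  by rewrite /sseq rev_cat rev_nseq.
case: (leqP i (n - 3)) => h.
  left; exists (n - 3 - i)%N, i; split; first lia.
  have -> : nseq (n - 3) (2%:R : A) = nseq i 2%:R ++ nseq (n - 3 - i) 2%:R.
    by rewrite -nseqD; congr nseq; lia.
  have {1}-> : i = size (nseq i (2%:R : A)) by rewrite size_nseq.
  by rewrite -catA rot_size_cat -catA.
case: (ltnP i n) => h2; last first.
  left; exists (n - 3)%N, 0%N; split; first lia.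
  by rewrite rot_oversize ?cats0 // size_cat size_nseq /=; lia.
have [->|->] : i = (n - 2)%N \/ i = (n - 1)%N by lia.
- right; left.
  have -> : nseq (n - 3) (2%:R : A) ++ [:: 1; n%:R - 2%:R; 1] =
      (nseq (n - 3) 2%:R ++ [:: 1 : A]) ++ [:: n%:R - 2%:R; 1] by rewrite -catA.
  have -> : (n - 2)%N = size (nseq (n - 3) (2%:R : A) ++ [:: 1 : A]).
    by rewrite size_cat size_nseq /=; lia.
  by rewrite rot_size_cat.
- right; right.
  have -> : nseq (n - 3) (2%:R : A) ++ [:: 1; n%:R - 2%:R; 1] =
      (nseq (n - 3) 2%:R ++ [:: 1; n%:R - 2%:R]) ++ [:: 1] by rewrite -catA.
  have -> : (n - 1)%N = size (nseq (n - 3) (2%:R : A) ++ [:: 1; n%:R - 2%:R]).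
    by rewrite size_cat size_nseq /=; lia.
  by rewrite rot_size_cat.
Qed.

Lemma reduction_window (n k : nat) (b c : seq A) :
  (4 <= n)%N -> (3 <= k <= n - 1)%N -> size b = k ->
  size c = (n + 2 - k)%N -> qsim (sseq A n) (oplus c b) ->
  exists2 F, sseq_rotation n F &
    b = head 0 b :: drop (n + 2 - k) F ++ [:: last 0 b].
Proof.
move=> hn /andP [hk1 hk2] hb hc [i Hi]; exists (oplus c b).
  by case: Hi => ->; [apply: rot_sseq | apply: rot_rev_sseq].
by rewrite (oplus_drop hc hb) -?(split_ends hb) //; lia.
Qed.

End Windows.

Section CharacteristicZero.
Variable A : comNzRingType.
Hypothesis charA : char0 A.

Lemma natr_SS_neq_sign (e : nat) : (e.+2)%:R <> 1 :> A /\ (e.+2)%:R <> -1 :> A.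
Proof.
split=> E.
  have : (e.+1)%:R = (e.+2)%:R - 1 :> A by rewrite [in RHS]mulrS; ring.
  by rewrite E subrr; apply/eqP; exact: charA.
have : (e.+3)%:R = (e.+2)%:R + 1 :> A by rewrite [in LHS]mulrS; ring.
by rewrite E addNr; apply/eqP; exact: charA.
Qed.

Lemma large_corner_not_quiddity (e : nat) (b1 bk : A) (w : seq A) :
  Mn w 0 0 = (e.+2)%:R -> ~ lambda_quiddity (b1 :: w ++ [:: bk]).
Proof.
have [h1 hN1] := natr_SS_neq_sign e.
by move=> Ew /quiddity_corner; rewrite Ew => -[].
Qed.

Lemma twos_not_quiddity (j : nat) (b1 bk : A) :
  ~ lambda_quiddity (b1 :: nseq j.+1 2%:R ++ [:: bk]).
Proof. by apply: (large_corner_not_quiddity (e := j)); rewrite Mn_twos mx2_corner. Qed.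

Lemma hub_not_quiddity (n a q : nat) (b1 bk : A) : (a + q + 6 <= n)%N ->
  ~ lambda_quiddity
    (b1 :: (nseq a 2%:R ++ [:: 1; n%:R - 2%:R; 1] ++ nseq q 2%:R) ++ [:: bk]).
Proof.
move=> hn; have [e ->] : exists e, n = (e + (a + q + 6))%N.
  by exists (n - (a + q + 6))%N; rewrite subnK.
apply: (large_corner_not_quiddity (e := e)).
rewrite !Mn_cat !Mn_cons Mn_nil !Mn_twos !qmatE !mx2_mul mx2_corner !natrD; ring.
Qed.

Lemma head_hub_not_quiddity (n q : nat) (b1 bk : A) : (q + 5 <= n)%N ->
  ~ lambda_quiddity (b1 :: ((n%:R - 2%:R) :: 1 :: nseq q 2%:R) ++ [:: bk]).
Proof.
move=> hn; have [e ->] : exists e, n = (e + (q + 5))%N.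
  by exists (n - (q + 5))%N; rewrite subnK.
apply: (large_corner_not_quiddity (e := e)).
rewrite !Mn_cons !Mn_twos !qmatE !mx2_mul mx2_corner !natrD; ring.
Qed.

Lemma tail_hub_not_quiddity (n a : nat) (b1 bk : A) : (a + 5 <= n)%N ->
  ~ lambda_quiddity (b1 :: (nseq a 2%:R ++ [:: 1; n%:R - 2%:R]) ++ [:: bk]).
Proof.
move=> hn; have [e ->] : exists e, n = (e + (a + 5))%N.
  by exists (n - (a + 5))%N; rewrite subnK.
apply: (large_corner_not_quiddity (e := e)).
rewrite !Mn_cat !Mn_cons Mn_nil !Mn_twos !qmatE !mx2_mul mx2_corner !natrD; ring.
Qed.

Lemma lone_hub_not_quiddity (n : nat) (b1 bk : A) : (4 <= n)%N ->
  ~ lambda_quiddity (b1 :: [:: n%:R - 2%:R] ++ [:: bk]).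
Proof.
move=> hn; have [e ->] : exists e, n = (e + 4)%N by exists (n - 4)%N; rewrite subnK.
apply: (large_corner_not_quiddity (e := e)).
rewrite !Mn_cons Mn_nil !qmatE !mx2_mul mx2_corner !natrD; ring.
Qed.

Definition admissible_ends (n m : nat) (w : seq A) (b1 bk : A) : Prop :=
  (w = 1 :: nseq (n - m - 1) 2%:R /\ b1 = (n - m - 1).+1%:R /\ bk = 1) \/
  (w = nseq (n - m - 1) 2%:R ++ [:: 1] /\ b1 = 1 /\ bk = (n - m - 1).+1%:R).

Lemma classify_hub_window (n m p q : nat) (b1 bk : A) :
  (3 <= m <= n - 1)%N -> (p + q = n - 3)%N ->
  let w := drop m (nseq p 2%:R ++ [:: 1; n%:R - 2%:R; 1] ++ nseq q 2%:R) in
  lambda_quiddity (b1 :: w ++ [:: bk]) -> admissible_ends n m w b1 bk.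
Proof.
move=> /andP [hm1 hm2] hpq w; rewrite {}/w drop_cat size_nseq.
case: ltnP => h.
  by rewrite drop_nseq => /hub_not_quiddity; case; lia.
case Ed: (m - p)%N => [|[|[|d]]] Hb.
- by case: (hub_not_quiddity (a := 0) _ Hb); lia.
- by case: (head_hub_not_quiddity _ Hb); lia.
- have [-> ->] := quiddity_one_twos Hb.
  have -> : q = (n - m - 1)%N by lia.
  by left.
- move: Hb; rewrite /= drop_nseq.
  have -> : (q - d = (q - d - 1).+1)%N by lia.
  by move/twos_not_quiddity.
Qed.

Lemma classify_head_hub (n m : nat) (b1 bk : A) :
  (3 <= m <= n - 1)%N ->
  let w := drop m ([:: n%:R - 2%:R; 1] ++ nseq (n - 3) 2%:R ++ [:: 1]) in
  lambda_quiddity (b1 :: w ++ [:: bk]) -> admissible_ends n m w b1 bk.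
Proof.
move=> /andP [hm1 hm2] w; have [m' Em] : exists m', m = m'.+2.
  by exists (m - 2)%N; lia.
rewrite /admissible_ends {}/w Em /= drop_cat size_nseq.
case: ltnP => h.
  rewrite drop_nseq => /quiddity_twos_one [-> ->].
  have -> : (n - 3 - m' = n - m'.+2 - 1)%N by lia.
  by right.
have -> : (m' - (n - 3) = 0)%N by lia.
have -> : (n - m'.+2 - 1 = 0)%N by lia.
by move=> /(quiddity_twos_one (j := 0)) [-> ->]; right.
Qed.

Lemma classify_tail_hub (n m : nat) (b1 bk : A) :
  (4 <= n)%N -> (3 <= m <= n - 1)%N ->
  let w := drop m ([:: 1] ++ nseq (n - 3) 2%:R ++ [:: 1; n%:R - 2%:R]) in
  ~ lambda_quiddity (b1 :: w ++ [:: bk]).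
Proof.
move=> hn /andP [hm1 hm2] w; have [m' Em] : exists m', m = m'.+1.
  by exists (m - 1)%N; lia.
rewrite {}/w Em /= drop_cat size_nseq.
case: ltnP => h.
  by rewrite drop_nseq; apply: tail_hub_not_quiddity; lia.
have [E|E] : (m' - (n - 3) = 0)%N \/ (m' - (n - 3) = 1)%N by lia.
- by rewrite E; apply: (tail_hub_not_quiddity (a := 0)); lia.
- by rewrite E; exact: lone_hub_not_quiddity.
Qed.

Lemma classify_windows (n m : nat) (F : seq A) (b1 bk : A) :
  (4 <= n)%N -> (3 <= m <= n - 1)%N -> sseq_rotation n F ->
  lambda_quiddity (b1 :: drop m F ++ [:: bk]) ->
  admissible_ends n m (drop m F) b1 bk.
Proof.
move=> hn hm [[p [q [hpq ->]]] | [-> | ->]].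
- exact: classify_hub_window.
- exact: classify_head_hub.
- by move/(classify_tail_hub hn hm).
Qed.

Lemma reduction_necessary (n k : nat) (b c : seq A) :
  (4 <= n)%N -> (3 <= k)%N -> (k <= n - 1)%N -> size b = k ->
  size c = (n + 2 - k)%N -> lambda_quiddity b -> qsim (sseq A n) (oplus c b) ->
  b = (k%:R - 2%:R) :: 1 :: nseq (k - 3) 2%:R ++ [:: 1] \/
  b = 1 :: nseq (k - 3) 2%:R ++ [:: 1; k%:R - 2%:R].
Proof.
move=> hn hk1 hk2 hb hc Hb Hs.
have hk : (3 <= k <= n - 1)%N by apply/andP.
have [F HF Eb] := reduction_window hn hk hb hc Hs.
have hm : (3 <= n + 2 - k <= n - 1)%N by apply/andP; split; lia.
rewrite Eb in Hb; have := classify_windows hn hm HF Hb; rewrite /admissible_ends.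
have -> : (n - (n + 2 - k) - 1 = k - 3)%N by lia.
have -> : k%:R - 2%:R = (k - 3).+1%:R :> A.
  by rewrite -natrB; [congr _%:R|]; lia.
case=> [[Ew [E1 Ek]] | [Ew [E1 Ek]]]; rewrite Eb Ew E1 Ek; first by left.
by right; rewrite -catA.
Qed.

End CharacteristicZero.

Section Sufficiency.
Variable A : comNzRingType.

Lemma reduction_sufficient (n k : nat) (b : seq A) :
  (3 <= k)%N -> (k <= n - 1)%N ->
  b = (k%:R - 2%:R) :: 1 :: nseq (k - 3) 2%:R ++ [:: 1] \/
  b = 1 :: nseq (k - 3) 2%:R ++ [:: 1; k%:R - 2%:R] ->
  lambda_quiddity b /\
  exists c : seq A, size c = (n + 2 - k)%N /\ qsim (sseq A n) (oplus c b).
Proof.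
move=> hk1 hk2; set x := n%:R - 2%:R : A.
have [j Ek] : exists j, k = (j + 3)%N by exists (k - 3)%N; lia.
have [r Er] : exists r, (n - k = r.+1)%N by exists (n - k - 1)%N; lia.
have -> : (k - 3 = j)%N by lia.
have -> : k%:R - 2%:R = (j.+1)%:R :> A by rewrite Ek natrD; ring.
case=> ->.
- have -> : (j.+1)%:R :: 1 :: nseq j 2%:R ++ [:: 1] =
      (j.+1)%:R :: (1 :: nseq j 2%:R) ++ [:: 1 : A] by [].
  split; first exact: quiddity_left_form.
  exists ((2%:R - 1) :: (nseq r 2%:R ++ [:: 1]) ++ [:: x - (j.+1)%:R]).
  split; first by rewrite /= !size_cat size_nseq /=; lia.
  exists k; left; rewrite oplus_explicit.
  have -> : sseq A n = ([:: 1; x; 1] ++ nseq j 2%:R) ++ nseq r.+1 2%:R.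
    by rewrite /sseq -catA -nseqD; congr (_ ++ nseq _ _); lia.
  have {1}-> : k = size ([:: 1; x; 1] ++ nseq j (2%:R : A)).
    by rewrite size_cat size_nseq /=; lia.
  by rewrite rot_size_cat /= -catA.
- have -> : 1 :: nseq j 2%:R ++ [:: 1; (j.+1)%:R] =
      1 :: (nseq j 2%:R ++ [:: 1]) ++ [:: (j.+1)%:R : A] by rewrite -catA.
  split; first exact: quiddity_right_form.
  exists ((x - (j.+1)%:R) :: (1 :: nseq r 2%:R) ++ [:: 2%:R - 1]).
  split; first by rewrite /= !size_cat size_nseq /=; lia.
  exists 1%N; left; rewrite oplus_explicit.
  have En : (n - 3 = r + j.+1)%N by lia.
  by rewrite /rot /sseq /= En nseqD -catA.
Qed.

End Sufficiency.

Theorem lemma4p9 (A : comNzRingType) (n k : nat) (b : seq A) :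
  char0 A -> (4 <= n)%N -> (3 <= k)%N -> (k <= n - 1)%N -> size b = k ->
  ((lambda_quiddity b /\
    exists c : seq A, size c = (n + 2 - k)%N /\ qsim (sseq A n) (oplus c b))
   <->
   (b = (k%:R - 2%:R) :: 1 :: nseq (k - 3) 2%:R ++ [:: 1] \/
    b = 1 :: nseq (k - 3) 2%:R ++ [:: 1; k%:R - 2%:R])).
Proof.
move=> charA hn hk1 hk2 hb; split; last exact: reduction_sufficient.
by move=> [Hb [c [hc Hs]]]; exact: (reduction_necessary charA hn hk1 hk2 hb hc Hb Hs).
Qed.
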